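(* Let $(\mathfrak{h},[\;,\;],\langle\;,\;\rangle_{\mathfrak{h}})$ be a Lorentzian nilpotent Lie algebra whose center $\mathrm{Z}(\mathfrak{h})$ is nondegenerate and positive definite, with $\mathfrak{g}$, $[\;,\;]_{\mathfrak{g}}$, $\langle\;,\;\rangle_{\mathfrak{g}}$, $\langle\;,\;\rangle_z$, $\omega$, $\omega_u$, $\omega_u^*$, $S_x$, $J_u$ as in the context. Then the Ricci curvature $\mathrm{ric}_{\mathfrak{h}}$ of $\mathfrak{h}$ satisfies $\mathrm{ric}_{\mathfrak{h}}(u,v)=\mathrm{ric}_{\mathfrak{g}}(u,v)-\tfrac12\mathrm{tr}(\omega_u^*\circ\omega_v)$ for $u,v\in\mathfrak{g}$, $\mathrm{ric}_{\mathfrak{h}}(x,y)=-\tfrac14\mathrm{tr}(S_x\circ S_y)$ for $x,y\in\mathrm{Z}(\mathfrak{h})$, $\mathrm{ric}_{\mathfrak{h}}(u,x)=-\tfrac14\mathrm{tr}(J_u\circ S_x)$ for $x\in\mathrm{Z}(\mathfrak{h})$, $u\in\mathfrak{g}$, where $\mathrm{ric}_{\mathfrak{g}}$ is the Ricci curvature of $(\mathfrak{g},[\;,\;]_{\mathfrak{g}},\langle\;,\;\rangle_{\mathfrak{g}})$.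
   Context: Setting: $\mathfrak{h}$ is a real finite-dimensional nilpotent Lie algebra with a Lorentzian inner product $\langle\;,\;\rangle_{\mathfrak{h}}$ (signature $(1,n-1)$) whose center $\mathrm{Z}(\mathfrak{h})$ is nondegenerate with positive definite restricted inner product $\langle\;,\;\rangle_z$. Put $\mathfrak{g}=\mathrm{Z}(\mathfrak{h})^\perp$ with restricted inner product $\langle\;,\;\rangle_{\mathfrak{g}}$. For $u,v\in\mathfrak{g}$ write $[u,v]=[u,v]_{\mathfrak{g}}+\omega(u,v)$ with $[u,v]_{\mathfrak{g}}\in\mathfrak{g}$, $\omega(u,v)\in\mathrm{Z}(\mathfrak{h})$; $(\mathfrak{g},[\;,\;]_{\mathfrak{g}})$ is a Lie algebra. For $u\in\mathfrak{g}$: $\omega_u:\mathfrak{g}\to\mathrm{Z}(\mathfrak{h})$, $v\mapsto\omega(u,v)$; $\omega_u^*:\mathrm{Z}(\mathfrak{h})\to\mathfrak{g}$ given by $\langle\omega_u^*(x),v\rangle_{\mathfrak{g}}=\langle\omega(u,v),x\rangle_z$; $\mathrm{ad}_u(v)=[u,v]_{\mathfrak{g}}$ with adjoint $\mathrm{ad}_u^*$ w.r.t. $\langle\;,\;\rangle_{\mathfrak{g}}$; $J_u:\mathfrak{g}\to\mathfrak{g}$, $J_u(v)=\mathrm{ad}_v^*(u)$. For $x\in\mathrm{Z}(\mathfrak{h})$, $S_x:\mathfrak{g}\to\mathfrak{g}$, $S_x(u)=\omega_u^*(x)$. Ricci curvature of a pseudo-Euclidean Lie algebra: Levi-Civita product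 $2\langle \mathrm{L}_uv,w\rangle=\langle[u,v],w\rangle+\langle[w,u],v\rangle+\langle[w,v],u\rangle$, curvature $K(u,v)=\mathrm{L}_{[u,v]}-[\mathrm{L}_u,\mathrm{L}_v]$, $\mathrm{ric}(u,v)=\mathrm{tr}(w\mapsto K(u,w)v)$. *)

From HB Require Import structures.
From mathcomp Require Import all_boot all_order all_algebra.
From mathcomp Require Export reals.
From Stdlib Require Export ClassicalEpsilon.
Set Implicit Arguments. Unset Strict Implicit. Unset Printing Implicit Defensive.
Import Order.TTheory GRing.Theory Num.Theory.
Local Open Scope ring_scope.

Section PseudoEuclideanLie.
Variables (R : realType) (V : vectType R).

Definition is_lie_bracket (br : V -> V -> V) : Prop :=
  [/\ (forall a u v w, br (a *: u + v) w = a *: br u w + br v w),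
      (forall a u v w, br w (a *: u + v) = a *: br w u + br w v),
      (forall u, br u u = 0) &
      (forall u v w, br u (br v w) + br v (br w u) + br w (br u v) = 0)].

Definition is_sym_bilinear (B : V -> V -> R) : Prop :=
  (forall a u v w, B (a *: u + v) w = a * B u w + B v w) /\
  (forall u v, B u v = B v u).

Definition lorentzian (B : V -> V -> R) : Prop :=
  exists e : seq V, basis_of fullv e /\
    forall i j, (i < size e)%N -> (j < size e)%N ->
      B e`_i e`_j = if i == j then (if i == 0%N then -1 else 1) else 0.

(* nilpotent: the lower central series vanishes, i.e. for some k all
   iterated brackets [x_1,[x_2,...,[x_k,x_0]...]] vanish *)
Definition nilpotent (br : V -> V -> V) : Prop :=
  exists k : nat, forall (x0 : V) (xs : seq V), size xs = k -> foldr br x0 xs = 0.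

Definition trace_on (U : {vspace V}) (f : V -> V) : R :=
  \sum_(i < \dim U) coord (vbasis U) i (f (tnth (vbasis U) i)).

Definition LC (U : {vspace V}) (b : V -> V -> V) (B : V -> V -> R) (u v : V) : V :=
  epsilon (inhabits 0) (fun l => l \in U /\
    forall w, w \in U -> 2 * B l w = B (b u v) w + B (b w u) v + B (b w v) u).

Definition curv (U : {vspace V}) (b : V -> V -> V) (B : V -> V -> R) (u v w : V) : V :=
  LC U b B (b u v) w - (LC U b B u (LC U b B v w) - LC U b B v (LC U b B u w)).

Definition ricci (U : {vspace V}) (b : V -> V -> V) (B : V -> V -> R) (u v : V) : R :=
  trace_on U (fun w => curv U b B u w v).

Definition adjB (U : {vspace V}) (B : V -> V -> R) (f : V -> V) (y : V) : V :=
  epsilon (inhabits 0) (fun a => a \in U /\ forall v, v \in U -> B a v = B (f v) y).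

Variables (br : V -> V -> V) (B : V -> V -> R) (g Z : {vspace V}).

Definition brg (u v : V) : V := daddv_pi g Z (br u v).
Definition omega (u v : V) : V := daddv_pi Z g (br u v).
Definition omega_star (u x : V) : V := adjB g B (omega u) x.
Definition S_op (x u : V) : V := omega_star u x.
Definition J_op (u v : V) : V := adjB g B (brg v) u.

End PseudoEuclideanLie.

(* Split h = g (+) Z orthogonally.  Testing the Koszul formula separately
   against g and against Z expresses the Levi-Civita product of h through that
   of g: for u, v in g and x, y in Z,
     L_u v = L^g_u v + omega(u,v)/2,   L_u x = L_x u = - S_x u / 2,   L_x y = 0.
   Substituting into K(u,w)v and computing traces with dual bases adapted to the
   splitting, the remaining terms are traces that cancel or vanish: S_x is skew,
   so tr S_x = 0; tr (omega_u^* o omega_v) is symmetric in u and v; tr (ad_u o S_x)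
   = tr (S_x o ad_u); and since h is nilpotent every ad_a of g is traceless, hence
   so is w |-> L^g_w a. *)

From HB Require Import structures.
From mathcomp Require Import all_boot all_order all_algebra.
From mathcomp Require Import complex ring lra.
Import Order.TTheory GRing.Theory Num.Theory.
Local Open Scope ring_scope.
Set Implicit Arguments. Unset Strict Implicit.

Lemma mxtrace_nilpotent (R : rcfType) n (A : 'M[R]_n) k : A ^+ k = 0 -> \tr A = 0.
Proof.
case: n A => [|n] A Ak; first by rewrite /mxtrace big_ord0.
pose f := real_complex R; pose A' := map_mx f A.
have A'k : A' ^+ k = 0.
  suff <- : map_mx f (A ^+ k) = A' ^+ k by rewrite Ak map_mx0.
  by elim: k {Ak} => [|j IH]; rewrite ?map_mx1 // !exprS -!mulmxE map_mxM IH.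
have minp : mxminpoly A' %| 'X^k.
  by apply: mxminpoly_min; rewrite rmorphXn /= horner_mx_X A'k.
have char_root0 z : root (char_poly A') z -> z = 0.
  rewrite -root_mxminpoly => /(root_dvdp minp).
  by rewrite /root hornerXn expf_eq0 => /andP[_ /eqP].
have [r Hr] := closed_field_poly_normal (char_poly A').
rewrite (monicP (char_poly_monic A')) scale1r in Hr.
have cpX : char_poly A' = 'X^(size r).
  rewrite Hr (eq_big_seq (fun _ => 'X)) ?big_const_seq ?count_predT ?iter_mulr_1 //.
  by move=> z zr; rewrite (char_root0 z) ?subr0 // Hr root_prod_XsubC.
have sr : size r = n.+1 by have := size_char_poly A'; rewrite cpX size_polyXn => -[].
have : \tr A' = 0.
  apply/eqP; rewrite -oppr_eq0 -char_poly_trace // cpX coefXn sr /=.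
  by rewrite eqn_leq ltnn andbF.
by rewrite trace_map_mx -(rmorph0 f) => /complexI.
Qed.

Section LinearMaps.
Variables (R : realType) (V : vectType R).

Definition linmap (f : V -> V) (hf : linear f) : {linear V -> V} :=
  HB.pack f (GRing.isLinear.Build _ _ _ _ f hf).
Definition scalmap (phi : V -> R) (hphi : scalar phi) : {scalar V} :=
  HB.pack phi (GRing.isLinear.Build _ _ _ _ phi hphi).

Lemma linear_lincomb (f : V -> V) : linear f ->
  forall (I : Type) (r : seq I) (c : I -> R) (x : I -> V),
  f (\sum_(i <- r) c i *: x i) = \sum_(i <- r) c i *: f (x i).
Proof.
move=> hf I r c x; change f with (linmap hf : V -> V).
by rewrite linear_sum; apply: eq_bigr => i _; rewrite linearZ.
Qed.

Lemma scalar_lincomb (phi : V -> R) : scalar phi ->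
  forall (I : Type) (r : seq I) (c : I -> R) (x : I -> V),
  phi (\sum_(i <- r) c i *: x i) = \sum_(i <- r) c i * phi (x i).
Proof.
move=> hphi I r c x; change phi with (scalmap hphi : V -> R).
by rewrite linear_sum; apply: eq_bigr => i _; rewrite linearZ.
Qed.

Lemma linD (f : V -> V) : linear f -> {morph f : x y / x + y}.
Proof. by move=> hf x y; have := raddfD (linmap hf) x y. Qed.
Lemma linZ (f : V -> V) : linear f -> forall a, {morph f : x / a *: x}.
Proof. by move=> hf a x; have := linearZ_LR (linmap hf) a x. Qed.
Lemma linN (f : V -> V) : linear f -> {morph f : x / - x}.
Proof. by move=> hf x; have := raddfN (linmap hf) x. Qed.
Lemma lin0 (f : V -> V) : linear f -> f 0 = 0.
Proof. by move=> hf; have := raddf0 (linmap hf). Qed.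

Lemma vbasis_nth_mem (U : {vspace V}) i : (vbasis U)`_i \in U.
Proof.
have [lt_i | le_i] := ltnP i (size (vbasis U)); first exact/vbasis_mem/mem_nth.
by rewrite nth_default ?mem0v.
Qed.

End LinearMaps.

Section BilinearForm.
Variables (R : realType) (V : vectType R) (B : V -> V -> R).
Hypothesis HB : is_sym_bilinear B.

Lemma Bsym u v : B u v = B v u. Proof. exact: HB.2. Qed.
Lemma B_scalarl w : scalar (B ^~ w). Proof. by move=> a u v; exact: HB.1. Qed.
Lemma B_scalarr w : scalar (B w).
Proof. by move=> a u v; rewrite !(Bsym w) B_scalarl. Qed.

Lemma BDl w : {morph B ^~ w : x y / x + y}.
Proof. by move=> x y; have := raddfD (scalmap (B_scalarl w)) x y. Qed.
Lemma BZl a u w : B (a *: u) w = a * B u w.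
Proof. by have := linearZ_LR (scalmap (B_scalarl w)) a u. Qed.
Lemma B0l w : B 0 w = 0.
Proof. by have := raddf0 (scalmap (B_scalarl w)). Qed.
Lemma BNl u w : B (- u) w = - B u w.
Proof. by have := raddfN (scalmap (B_scalarl w)) u. Qed.
Lemma BBl u v w : B (u - v) w = B u w - B v w.
Proof. by rewrite BDl BNl. Qed.
Lemma BDr w : {morph B w : x y / x + y}.
Proof. by move=> x y; rewrite !(Bsym w) BDl. Qed.
Lemma BZr a u w : B w (a *: u) = a * B w u.
Proof. by rewrite !(Bsym w) BZl. Qed.
Lemma Bsuml (I : Type) (r : seq I) (F : I -> V) w :
  B (\sum_(i <- r) F i) w = \sum_(i <- r) B (F i) w.
Proof. by have := raddf_sum (scalmap (B_scalarl w)) r xpredT F. Qed.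
Lemma Bsumr (I : Type) (r : seq I) (F : I -> V) w :
  B w (\sum_(i <- r) F i) = \sum_(i <- r) B w (F i).
Proof. by rewrite Bsym Bsuml; apply: eq_bigr => i _; rewrite Bsym. Qed.

Definition nondegenerate (U : {vspace V}) :=
  forall x, x \in U -> (forall w, w \in U -> B x w = 0) -> x = 0.

Lemma nondegenerate_eq U a a' : nondegenerate U -> a \in U -> a' \in U ->
  (forall w, w \in U -> B a w = B a' w) -> a = a'.
Proof.
move=> ndU aU a'U eqB; apply/eqP; rewrite -subr_eq0; apply/eqP.
by apply: ndU => [|w wU]; rewrite ?rpredB // BBl eqB // subrr.
Qed.

Lemma riesz_representation U phi : nondegenerate U -> scalar phi ->
  exists2 l, l \in U & forall w, w \in U -> B l w = phi w.
Proof.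
move=> ndU lphi; pose n := \dim U; pose X := vbasis U.
pose G := \matrix_(i < n, j < n) B X`_i X`_j.
have BG (c : 'rV_n) (j : 'I_n) : B (\sum_(i < n) c 0 i *: X`_i) X`_j = (c *m G) 0 j.
  by rewrite Bsuml mxE; apply: eq_bigr => i _; rewrite BZl mxE.
have G_unit : G \in unitmx.
  rewrite -row_free_unit -kermx_eq0; apply/rowV0P => c /sub_kermxP cG0.
  have c_comb0 : \sum_(i < n) c 0 i *: X`_i = 0.
    apply: ndU => [|w wU]; first by apply: rpred_sum => i _; rewrite rpredZ ?vbasis_nth_mem.
    rewrite (coord_vbasis wU) Bsumr big1 // => j _.
    by rewrite BZr BG cG0 mxE mulr0.
  apply/rowP => i; rewrite mxE.
  by have /freeP := basis_free (vbasisP U); move/(_ (fun i => c 0 i) c_comb0 i).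
pose c := \row_(j < n) phi X`_j *m invmx G.
exists (\sum_(i < n) c 0 i *: X`_i).
  by apply: rpred_sum => i _; rewrite rpredZ ?vbasis_nth_mem.
move=> w wU; rewrite (coord_vbasis wU) Bsumr (scalar_lincomb lphi).
by apply: eq_bigr => j _; rewrite BZr BG /c mulmxKV // mxE.
Qed.

(* [s] lists the pairs (e_i, e^i) of a basis of [U] and its [B]-dual basis,
   encoded by the expansions [y = \sum_i <y, e^i> e_i = \sum_i <y, e_i> e^i];
   traces are then [\sum_i <f e_i, e^i>]. *)
Definition dual_bases (U : {vspace V}) (s : seq (V * V)) :=
  [/\ (forall p, p \in s -> p.1 \in U /\ p.2 \in U),
      (forall y, y \in U -> y = \sum_(p <- s) B y p.2 *: p.1) &
      (forall y, y \in U -> y = \sum_(p <- s) B y p.1 *: p.2)].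

Definition is_bilinear (Q : V -> V -> R) :=
  (forall y, scalar (Q ^~ y)) /\ (forall x, scalar (Q x)).

Lemma dual_bases_sum_eq U s s' Q : dual_bases U s -> dual_bases U s' -> is_bilinear Q ->
  \sum_(p <- s) Q p.1 p.2 = \sum_(p <- s') Q p.1 p.2.
Proof.
move=> [sU s1 s2] [s'U s'1 s'2] [Ql Qr].
transitivity (\sum_(p <- s) \sum_(q <- s') B p.2 q.1 * Q p.1 q.2).
  apply: eq_big_seq => p /sU[_ p2U].
  by rewrite {1}(s'2 _ p2U) (scalar_lincomb (Qr _)).
rewrite exchange_big /=; apply: eq_big_seq => q /s'U[q1U _].
rewrite [in RHS](s1 _ q1U) (scalar_lincomb (Ql _)).
by apply: eq_bigr => p _; rewrite Bsym.
Qed.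

Lemma dual_bases_swap U s : dual_bases U s -> dual_bases U [seq (p.2, p.1) | p <- s].
Proof.
move=> [sU s1 s2]; split=> [p /mapP[q /sU[? ?] ->] //|y yU|y yU]; rewrite big_map.
  exact: s2.
exact: s1.
Qed.

Lemma dual_bases_sum_swap U s Q : dual_bases U s -> is_bilinear Q ->
  \sum_(p <- s) Q p.1 p.2 = \sum_(p <- s) Q p.2 p.1.
Proof. by move=> ds bQ; rewrite (dual_bases_sum_eq ds (dual_bases_swap ds) bQ) big_map. Qed.

Lemma vbasis_dual_bases U : nondegenerate U -> exists s, dual_bases U s /\
  forall f, (forall w, w \in U -> f w \in U) ->
    trace_on U f = \sum_(p <- s) B (f p.1) p.2.
Proof.
move=> ndU; pose n := \dim U; pose X := vbasis U.
have /fin_all_exists[d Hd] (i : 'I_n) :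
    exists d, d \in U /\ forall w, w \in U -> B d w = coord X i w.
  have [d dU Hd] := riesz_representation ndU (linearP (coord X i)).
  by exists d.
exists [seq (X`_i, d i) | i : 'I_n <- index_enum 'I_n]; split; first split.
- by move=> p /mapP[i _ ->]; split; [exact: vbasis_nth_mem | exact: (Hd i).1].
- move=> y yU; rewrite big_map [LHS](coord_vbasis yU).
  by apply: eq_bigr => i _ /=; rewrite Bsym (Hd i).2.
- move=> y yU; rewrite big_map; apply: (nondegenerate_eq ndU yU).
    by apply: rpred_sum => i _; rewrite rpredZ ?(Hd i).1.
  move=> w wU; rewrite Bsuml {1}(coord_vbasis wU) Bsumr.
  by apply: eq_bigr => i _ /=; rewrite BZr BZl (Hd i).2 // mulrC.
- move=> f fU; rewrite big_map /trace_on; apply: eq_bigr => i _ /=.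
  by rewrite (tnth_nth 0) -(Hd i).2 ?fU ?vbasis_nth_mem // Bsym.
Qed.

Lemma trace_on_dual_bases U s f : nondegenerate U -> dual_bases U s ->
  (forall w, w \in U -> f w \in U) -> linear f ->
  trace_on U f = \sum_(p <- s) B (f p.1) p.2.
Proof.
move=> ndU ds fU hf; have [s0 [ds0 ->]] := vbasis_dual_bases ndU; last exact: fU.
apply: (dual_bases_sum_eq (Q := fun x y => B (f x) y) ds0 ds).
by split=> [y a u v | x]; rewrite ?linD ?linZ ?BDl ?BZl //; apply: B_scalarr.
Qed.

Lemma dual_bases_cat (U U1 U2 : {vspace V}) s1 s2 :
  (forall x y, x \in U1 -> y \in U2 -> B x y = 0) ->
  (U1 <= U)%VS -> (U2 <= U)%VS ->
  (forall y, y \in U -> exists2 y1, y1 \in U1 & y - y1 \in U2) ->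
  dual_bases U1 s1 -> dual_bases U2 s2 -> dual_bases U (s1 ++ s2).
Proof.
move=> orth sU1 sU2 dec [d1U d11 d12] [d2U d21 d22].
have orth' x y : x \in U2 -> y \in U1 -> B x y = 0 by move=> *; rewrite Bsym orth.
have {}dec y : y \in U -> exists y1 y2, [/\ y1 \in U1, y2 \in U2 & y = y1 + y2].
  by case/dec=> y1 y1U y2U; exists y1, (y - y1); rewrite addrCA subrr addr0.
split=> [p | y /dec[y1 [y2 [y1U y2U ->]]] | y /dec[y1 [y2 [y1U y2U ->]]]];
  rewrite ?big_cat /=.
- rewrite mem_cat => /orP[/d1U[? ?] | /d2U[? ?]].
    by split; apply: (subvP sU1).
  by split; apply: (subvP sU2).
- congr (_ + _); [rewrite {1}(d11 _ y1U) | rewrite {1}(d21 _ y2U)].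
    by apply: eq_big_seq => p /d1U[_ p2]; rewrite BDl (orth' _ _ y2U p2) addr0.
  by apply: eq_big_seq => p /d2U[_ p2]; rewrite BDl (orth _ _ y1U p2) add0r.
- congr (_ + _); [rewrite {1}(d12 _ y1U) | rewrite {1}(d22 _ y2U)].
    by apply: eq_big_seq => p /d1U[p1 _]; rewrite BDl (orth' _ _ y2U p1) addr0.
  by apply: eq_big_seq => p /d2U[p1 _]; rewrite BDl (orth _ _ y1U p1) add0r.
Qed.

Lemma dual_bases_sum_commute U s f h : dual_bases U s ->
  (forall w, w \in U -> f w \in U) -> linear f ->
  (forall w, w \in U -> h w \in U) -> linear h ->
  \sum_(p <- s) B (f (h p.1)) p.2 = \sum_(p <- s) B (h (f p.1)) p.2.
Proof.
move=> [sU s1 _] fU hf hU hh.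
have s1U p : p \in s -> p.1 \in U by case/sU.
transitivity (\sum_(p <- s) \sum_(q <- s) B (h p.1) q.2 * B (f q.1) p.2).
  apply: eq_big_seq => p /s1U p1U.
  by rewrite {1}(s1 (h p.1)) ?hU // (linear_lincomb hf) Bsuml; apply: eq_bigr => q _; rewrite BZl.
rewrite exchange_big /=; apply: eq_big_seq => q /s1U q1U.
rewrite [in RHS](s1 (f q.1)) ?fU // (linear_lincomb hh) Bsuml.
by apply: eq_bigr => p _; rewrite BZl mulrC.
Qed.

Lemma trace_on_nilpotent (U : {vspace V}) f k :
  (forall w, w \in U -> f w \in U) -> linear f ->
  (forall w, w \in U -> iter k f w = 0) -> trace_on U f = 0.
Proof.
move=> fU hf fk; pose n := \dim U; pose X := vbasis U.
have iterU j w : w \in U -> iter j f w \in U by move=> wU; elim: j => //= j; apply: fU.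
pose M := \matrix_(i < n, j < n) coord X j (f X`_i).
have MX j i l : (M ^+ j) i l = coord X l (iter j f X`_i).
  elim: j i l => [|j IH] i l.
    by rewrite expr0 mxE /= coord_free //; exact: basis_free (vbasisP U).
  rewrite exprSr -mulmxE mxE /= [in RHS](coord_vbasis (iterU j _ (vbasis_nth_mem U i))).
  rewrite (linear_lincomb hf) linear_sum; apply: eq_bigr => m _.
  by rewrite IH mxE linearZ.
have Mk : M ^+ k = 0 by apply/matrixP => i l; rewrite MX fk ?vbasis_nth_mem // linear0 mxE.
rewrite -(mxtrace_nilpotent Mk) /trace_on /mxtrace.
by apply: eq_bigr => i _; rewrite mxE (tnth_nth 0).
Qed.

Section LeviCivita.
Variables (U : {vspace V}) (b : V -> V -> V).
Hypotheses (ndU : nondegenerate U) (b_linl : forall v, linear (b ^~ v)).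

Lemma LC_spec u v : LC U b B u v \in U /\
  forall w, w \in U -> 2 * B (LC U b B u v) w = B (b u v) w + B (b w u) v + B (b w v) u.
Proof.
rewrite /LC; match goal with |- context[epsilon ?i ?P] => apply: (epsilon_spec i P) end.
pose phi w := 2^-1 * (B (b u v) w + B (b w u) v + B (b w v) u).
have lphi : scalar phi by move=> a x y; rewrite /phi !b_linl !BDr !BZr !BDl !BZl; ring.
have [l lU Hl] := riesz_representation ndU lphi.
by exists l; split=> // w wU; rewrite Hl // /phi mulrA divff ?mul1r ?pnatr_eq0.
Qed.

Lemma LC_mem u v : LC U b B u v \in U.
Proof. exact: (LC_spec u v).1. Qed.

Lemma LC_unique u v l : l \in U ->
  (forall w, w \in U -> 2 * B l w = B (b u v) w + B (b w u) v + B (b w v) u) ->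
  LC U b B u v = l.
Proof.
move=> lU Hl; have [LU HL] := LC_spec u v.
apply: (nondegenerate_eq ndU LU lU) => w wU.
by apply: (mulfI (_ : 2 != 0 :> R)); rewrite ?pnatr_eq0 // HL // Hl.
Qed.

Hypothesis b_linr : forall u, linear (b u).

Lemma LC_linearl v : linear (LC U b B ^~ v).
Proof.
move=> a u1 u2; apply: LC_unique => [|w wU]; first by rewrite rpredD ?rpredZ ?LC_mem.
rewrite BDl BZl mulrDr mulrCA !(LC_spec _ _).2 // b_linl b_linr.
by rewrite !BDl !BDr !BZl !BZr; ring.
Qed.

Lemma LC_linearr u : linear (LC U b B u).
Proof.
move=> a v1 v2; apply: LC_unique => [|w wU]; first by rewrite rpredD ?rpredZ ?LC_mem.
rewrite BDl BZl mulrDr mulrCA !(LC_spec _ _).2 // b_linr b_linr.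
by rewrite !BDl !BDr !BZl !BZr; ring.
Qed.

Lemma curv_mem u w v : curv U b B u w v \in U.
Proof. by rewrite /curv !rpredB ?LC_mem. Qed.

Lemma curv_linear u v : linear (fun w => curv U b B u w v).
Proof.
move=> a x y; rewrite /curv b_linr !LC_linearl LC_linearr.
apply: (nondegenerate_eq ndU) => [||t tU]; rewrite ?(rpredB, rpredD, rpredZ, LC_mem) //.
by rewrite !(BDl, BBl, BNl, BZl); ring.
Qed.

End LeviCivita.

Lemma adjB_spec U f y : nondegenerate U -> linear f -> adjB U B f y \in U /\
  forall v, v \in U -> B (adjB U B f y) v = B (f v) y.
Proof.
move=> ndU hf; rewrite /adjB.
match goal with |- context[epsilon ?i ?P] => apply: (epsilon_spec i P) end.
have lphi : scalar (fun v => B (f v) y) by move=> a u v; rewrite hf BDl BZl.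
by have [l lU Hl] := riesz_representation ndU lphi; exists l.
Qed.

Lemma adjB_unique U f y l : nondegenerate U -> linear f -> l \in U ->
  (forall v, v \in U -> B l v = B (f v) y) -> adjB U B f y = l.
Proof.
move=> ndU hf lU Hl; have [AU HA] := adjB_spec y ndU hf.
by apply: (nondegenerate_eq ndU AU lU) => w wU; rewrite HA // Hl.
Qed.

Lemma lorentzian_nondegenerate : lorentzian B -> nondegenerate fullv.
Proof.
move=> [e [eb He]] x _ Hx; pose X := in_tuple e.
have xe := coord_basis (X := X) eb (memvf x).
rewrite xe big1 // => j _; apply/eqP; rewrite scaler_eq0; apply/orP; left.
have := Hx e`_j (memvf _); rewrite {1}xe Bsuml (bigD1 j) //= big1 => [|i ij]; last first.
  by rewrite BZl He // (_ : (i == j :> nat) = false) ?mulr0 //; exact: negPf ij.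
rewrite BZl He // eqxx addr0; case: (nat_of_ord j == 0)%N.
  by rewrite mulrN1 => /eqP; rewrite oppr_eq0.
by rewrite mulr1 => ->.
Qed.

Lemma posdef_nondegenerate (U : {vspace V}) :
  (forall z, z \in U -> z != 0 -> 0 < B z z) -> nondegenerate U.
Proof.
move=> Hpos x xU Hx; apply/eqP/negPn/negP => nx.
by have := Hpos x xU nx; rewrite Hx // ltxx.
Qed.

Section Decomposition.
Variables (br : V -> V -> V) (Z g : {vspace V}).
Hypotheses (Hbr : is_lie_bracket br) (ndV : nondegenerate fullv) (ndZ : nondegenerate Z).
Hypothesis Zcentral : forall z x, z \in Z -> br z x = 0.
Hypothesis Hg : forall u, u \in g <-> forall z, z \in Z -> B u z = 0.
Hypothesis Hnil : nilpotent br.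

Lemma br_linl v : linear (br ^~ v). Proof. by case: Hbr => H _ _ _ a u w; exact: H. Qed.
Lemma br_linr u : linear (br u). Proof. by case: Hbr => _ H _ _ a v w; exact: H. Qed.
Lemma brDl v : {morph br ^~ v : x y / x + y}. Proof. exact: linD (br_linl v). Qed.
Lemma brDr u : {morph br u : x y / x + y}. Proof. exact: linD (br_linr u). Qed.

Lemma br_anti u v : br u v = - br v u.
Proof.
case: Hbr => _ _ br_alt _; have := br_alt (u + v).
by rewrite brDl !brDr !br_alt add0r addr0 => /eqP; rewrite addr_eq0 => /eqP.
Qed.

Lemma br_centralr x z : z \in Z -> br x z = 0.
Proof. by move=> zZ; rewrite br_anti Zcentral ?oppr0. Qed.

Lemma orth_gZ x z : x \in g -> z \in Z -> B x z = 0. Proof. by move=> /Hg H /H. Qed.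
Lemma orth_Zg z x : z \in Z -> x \in g -> B z x = 0.
Proof. by move=> zZ xg; rewrite Bsym orth_gZ. Qed.

Lemma capv_gZ : (g :&: Z = 0)%VS.
Proof.
apply/eqP; rewrite -subv0; apply/subvP => x /memv_capP[xg xZ]; rewrite memv0.
by apply/eqP/ndZ => // z zZ; rewrite orth_gZ.
Qed.

Lemma addv_gZ : (g + Z)%VS = fullv.
Proof.
apply/eqP; rewrite eqEsubv subvf /=; apply/subvP => y _.
have [l lZ Hl] := riesz_representation ndZ (B_scalarr y).
rewrite -(subrK l y) memv_add //; apply/Hg => z zZ.
by rewrite BBl Hl // Bsym subrr.
Qed.

Local Notation Pg := (daddv_pi g Z).
Local Notation Pz := (daddv_pi Z g).

Lemma Pg_add_Pz y : Pg y + Pz y = y.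
Proof. by apply: daddv_pi_add; rewrite ?capv_gZ ?addv_gZ ?memvf. Qed.
Lemma Pg_id y : y \in g -> Pg y = y.
Proof. by apply: daddv_pi_id; rewrite capv_gZ. Qed.

Lemma nondegenerate_g : nondegenerate g.
Proof.
move=> x xg Hx; apply: ndV => [|w _]; first exact: memvf.
by rewrite -(Pg_add_Pz w) BDr Hx ?memv_pi // orth_gZ ?memv_pi // addr0.
Qed.

Lemma eq_B x y : (forall t, B x t = B y t) -> x = y.
Proof. by move=> H; apply: (nondegenerate_eq ndV); rewrite ?memvf. Qed.

Local Notation bg := (brg br g Z).
Local Notation om := (omega br g Z).
Local Notation Lh := (LC fullv br B).
Local Notation Lg := (LC g bg B).
Local Notation S := (S_op br B g Z).
Local Notation J := (J_op br B g Z).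
Local Notation Kh u w v := (curv fullv br B u w v).
Local Notation Kg u w v := (curv g bg B u w v).

Lemma bg_mem u v : bg u v \in g. Proof. exact: memv_pi. Qed.
Lemma om_mem u v : om u v \in Z. Proof. exact: memv_pi. Qed.
Lemma br_split u v : br u v = bg u v + om u v. Proof. by rewrite Pg_add_Pz. Qed.
Lemma bg_linl v : linear (bg ^~ v). Proof. by move=> a x y; rewrite /brg br_linl linearP. Qed.
Lemma bg_linr u : linear (bg u). Proof. by move=> a x y; rewrite /brg br_linr linearP. Qed.
Lemma om_linl v : linear (om ^~ v). Proof. by move=> a x y; rewrite /omega br_linl linearP. Qed.
Lemma om_linr u : linear (om u). Proof. by move=> a x y; rewrite /omega br_linr linearP. Qed.
Lemma bg_anti u v : bg u v = - bg v u. Proof. by rewrite /brg br_anti linearN. Qed.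
Lemma om_anti u v : om u v = - om v u. Proof. by rewrite /omega br_anti linearN. Qed.

Lemma Lh_unique u v l :
  (forall w, w \in g -> 2 * B l w = B (br u v) w + B (br w u) v + B (br w v) u) ->
  (forall w, w \in Z -> 2 * B l w = B (br u v) w + B (br w u) v + B (br w v) u) ->
  Lh u v = l.
Proof.
move=> Hlg HlZ; apply: (LC_unique ndV br_linl (memvf l)) => w _.
rewrite -(Pg_add_Pz w) !brDl !BDr !BDl mulrDr Hlg ?HlZ ?memv_pi //; ring.
Qed.

Lemma Lh_linl v : linear (Lh ^~ v). Proof. exact: (LC_linearl ndV br_linl br_linr). Qed.
Lemma Lh_linr u : linear (Lh u). Proof. exact: (LC_linearr ndV br_linl br_linr). Qed.
Lemma Lh_Dl v : {morph Lh ^~ v : x y / x + y}. Proof. exact: linD (Lh_linl v). Qed.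
Lemma Lh_Dr u : {morph Lh u : x y / x + y}. Proof. exact: linD (Lh_linr u). Qed.
Lemma Lh_Zr u a : {morph Lh u : x / a *: x}. Proof. exact: linZ (Lh_linr u) a. Qed.
Lemma Lh_Nr u : {morph Lh u : x / - x}. Proof. exact: linN (Lh_linr u). Qed.
Lemma Lh_0l v : Lh 0 v = 0. Proof. exact: lin0 (Lh_linl v). Qed.
Lemma Lh_0r u : Lh u 0 = 0. Proof. exact: lin0 (Lh_linr u). Qed.

Lemma Lg_mem u v : Lg u v \in g. Proof. exact: (LC_mem nondegenerate_g bg_linl). Qed.
Lemma Lg_spec u v w : w \in g ->
  2 * B (Lg u v) w = B (bg u v) w + B (bg w u) v + B (bg w v) u.
Proof. exact: (LC_spec nondegenerate_g bg_linl u v).2. Qed.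

Lemma S_mem x u : S x u \in g.
Proof. exact: (adjB_spec x nondegenerate_g (om_linr u)).1. Qed.
Lemma S_spec x u w : w \in g -> B (S x u) w = B (om u w) x.
Proof. exact: (adjB_spec x nondegenerate_g (om_linr u)).2. Qed.
Lemma J_mem u v : J u v \in g.
Proof. exact: (adjB_spec u nondegenerate_g (bg_linr v)).1. Qed.
Lemma J_spec u v w : w \in g -> B (J u v) w = B (bg v w) u.
Proof. exact: (adjB_spec u nondegenerate_g (bg_linr v)).2. Qed.

Lemma S_linr x : linear (S x).
Proof.
move=> a u1 u2; apply: (adjB_unique nondegenerate_g (om_linr _)) => [|w wg].
  by rewrite rpredD ?rpredZ ?S_mem.
by rewrite BDl BZl !S_spec // om_linl BDl BZl.
Qed.
Lemma S_linl u : linear (S ^~ u).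
Proof.
move=> a x1 x2; apply: (adjB_unique nondegenerate_g (om_linr _)) => [|w wg].
  by rewrite rpredD ?rpredZ ?S_mem.
by rewrite BDl BZl !S_spec // BDr BZr.
Qed.
Lemma J_linr u : linear (J u).
Proof.
move=> a v1 v2; apply: (adjB_unique nondegenerate_g (bg_linr _)) => [|w wg].
  by rewrite rpredD ?rpredZ ?J_mem.
by rewrite BDl BZl !J_spec // bg_linl BDl BZl.
Qed.

Lemma S_skew x u w : u \in g -> w \in g -> B (S x u) w = - B u (S x w).
Proof. by move=> ug wg; rewrite !S_spec // (Bsym u) S_spec // om_anti BNl. Qed.

Lemma Lh_gg u v : u \in g -> v \in g -> Lh u v = Lg u v + 2^-1 *: om u v.
Proof.
move=> ug vg; apply: Lh_unique => w wU.
- by rewrite !br_split !BDl BZl !(orth_Zg (om_mem _ _)) // mulrDr Lg_spec //; field.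
- rewrite !(Zcentral _ wU) !B0l br_split !BDl BZl (orth_gZ (Lg_mem _ _) wU).
  by rewrite (orth_gZ (bg_mem _ _) wU); field.
Qed.

Lemma Lh_gZ u x : u \in g -> x \in Z -> Lh u x = - (2^-1 *: S x u).
Proof.
move=> ug xZ; apply: Lh_unique => w wU; rewrite BNl BZl (br_centralr u xZ) (br_centralr w xZ) !B0l.
- by rewrite S_spec // br_split BDl (orth_gZ (bg_mem _ _) xZ) (om_anti w) BNl; field.
- by rewrite (orth_gZ (S_mem _ _) wU) (Zcentral _ wU) B0l; field.
Qed.

Lemma Lh_Zg x u : x \in Z -> u \in g -> Lh x u = - (2^-1 *: S x u).
Proof.
move=> xZ ug; apply: Lh_unique => w wU; rewrite BNl BZl (Zcentral _ xZ) (br_centralr w xZ) !B0l.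
- by rewrite S_spec // br_split BDl (orth_gZ (bg_mem _ _) xZ) (om_anti w) BNl; field.
- by rewrite (orth_gZ (S_mem _ _) wU) (Zcentral _ wU) B0l; field.
Qed.

Lemma Lh_ZZ x y : x \in Z -> y \in Z -> Lh x y = 0.
Proof.
move=> xZ yZ; apply: Lh_unique => w _;
  by rewrite (Zcentral _ xZ) (br_centralr w xZ) (br_centralr w yZ) !B0l mulr0 !addr0.
Qed.

Lemma Kh_linear u v : linear (fun w => Kh u w v).
Proof. exact: (curv_linear ndV br_linl br_linr). Qed.

Lemma Kh_ZgZ x y w : x \in Z -> y \in Z -> w \in g -> Kh x w y = - (4^-1 *: S x (S y w)).
Proof.
move=> xZ yZ wg; rewrite /curv (Zcentral _ xZ) Lh_0l (Lh_ZZ xZ yZ) Lh_0r (Lh_gZ wg yZ).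
rewrite Lh_Nr Lh_Zr (Lh_Zg xZ (S_mem y w)).
by apply: eq_B => t; rewrite !(BDl, BBl, BNl, BZl, B0l); field.
Qed.

Lemma Kh_ZZZ x y w : x \in Z -> y \in Z -> w \in Z -> Kh x w y = 0.
Proof.
move=> xZ yZ wZ.
by rewrite /curv (Zcentral _ xZ) Lh_0l (Lh_ZZ xZ yZ) (Lh_ZZ wZ yZ) !Lh_0r !subrr.
Qed.

Lemma trace_split_gZ sg sz f : dual_bases g sg -> dual_bases Z sz -> linear f ->
  trace_on fullv f = \sum_(p <- sg) B (f p.1) p.2 + \sum_(p <- sz) B (f p.1) p.2.
Proof.
move=> dg dz hf; rewrite -big_cat.
apply: (trace_on_dual_bases ndV _ (fun w _ => memvf (f w)) hf).
apply: (dual_bases_cat orth_gZ (subvf g) (subvf Z) _ dg dz) => y _.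
by exists (Pg y); rewrite ?memv_pi // -{1}(Pg_add_Pz y) addrAC subrr add0r memv_pi.
Qed.

Lemma ricci_ZZ x y : x \in Z -> y \in Z ->
  ricci fullv br B x y = - 4^-1 * trace_on g (fun w => S x (S y w)).
Proof.
move=> xZ yZ; have [sg [dg _]] := vbasis_dual_bases nondegenerate_g.
have [sz [dz _]] := vbasis_dual_bases ndZ.
rewrite /ricci (trace_split_gZ dg dz (Kh_linear x y)) (trace_on_dual_bases nondegenerate_g dg).
- case: dg dz => [sgg _ _] [szZ _ _].
  rewrite [X in _ + X]big1_seq ?addr0 => [|p /szZ[p1Z _]]; last by rewrite Kh_ZZZ // B0l.
  by rewrite mulr_sumr; apply: eq_big_seq => p /sgg[p1g _]; rewrite Kh_ZgZ // BNl BZl mulNr.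
- by move=> w _; exact: S_mem.
- by move=> a u v; rewrite !S_linr.
Qed.

Lemma Kh_gZZ_Z u x w z : u \in g -> x \in Z -> w \in Z -> z \in Z -> B (Kh u w x) z = 0.
Proof.
move=> ug xZ wZ zZ; rewrite /curv (br_centralr u wZ) Lh_0l (Lh_ZZ wZ xZ) Lh_0r (Lh_gZ ug xZ).
rewrite Lh_Nr Lh_Zr (Lh_Zg wZ (S_mem x u)).
by rewrite !(BDl, BBl, BNl, BZl, B0l) (orth_gZ (S_mem _ _) zZ); ring.
Qed.

Lemma Kh_ggZ_g u x w d : u \in g -> x \in Z -> w \in g -> d \in g ->
  B (Kh u w x) d = 2^-1 * (B (Lg u (S x w)) d - B (S x (bg u w)) d - B (Lg w (S x u)) d).
Proof.
move=> ug xZ wg dg; rewrite /curv br_split Lh_Dl (Lh_gZ (bg_mem _ _) xZ) (Lh_ZZ (om_mem _ _) xZ).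
rewrite (Lh_gZ wg xZ) (Lh_gZ ug xZ) !Lh_Nr !Lh_Zr (Lh_gg ug (S_mem x w)) (Lh_gg wg (S_mem x u)).
by rewrite !(BDl, BBl, BNl, BZl, B0l) !(orth_Zg (om_mem _ _) dg); field.
Qed.

Lemma trace_bg_eq0 a : trace_on g (bg a) = 0.
Proof.
have [k Hk] := Hnil.
apply: (trace_on_nilpotent (k := k)) => [w _ | | w wg]; [exact: bg_mem | exact: bg_linr |].
have iter_br : iter k (br a) w = 0.
  by rewrite -(Hk w (nseq k a)) ?size_nseq //; elim: (k) => //= j ->.
suff -> : iter k (bg a) w = Pg (iter k (br a) w) by rewrite iter_br linear0.
elim: (k) => /= [|j ->]; first by rewrite Pg_id.
by rewrite /brg -{2}(Pg_add_Pz (iter j (br a) w)) brDr (br_centralr _ (memv_pi _ _ _)) addr0.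
Qed.

Section DualBasesOfg.
Variable sg : seq (V * V).
Hypothesis dg : dual_bases g sg.

Lemma sum_bg_l_eq0 a : \sum_(p <- sg) B (bg p.1 a) p.2 = 0.
Proof.
transitivity (- trace_on g (bg a)); last by rewrite trace_bg_eq0 oppr0.
rewrite (trace_on_dual_bases nondegenerate_g dg (fun w _ => bg_mem a w) (bg_linr a)) -sumrN.
by apply: eq_bigr => p _; rewrite bg_anti BNl.
Qed.

Lemma sum_bg_dual_eq0 c : \sum_(p <- sg) B (bg p.2 p.1) c = 0.
Proof.
have bQ : is_bilinear (fun d e => B (bg e d) c).
  by split=> [y | x] a u v; rewrite ?bg_linl ?bg_linr BDl BZl.
have E : \sum_(p <- sg) B (bg p.2 p.1) c = - \sum_(p <- sg) B (bg p.2 p.1) c.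
  rewrite {1}(dual_bases_sum_swap dg bQ) -sumrN.
  by apply: eq_bigr => p _; rewrite bg_anti BNl.
by move: E; set X := \sum_(p <- _) _; lra.
Qed.

Lemma sum_Lg_l_eq0 a : \sum_(p <- sg) B (Lg p.1 a) p.2 = 0.
Proof.
have bQ : is_bilinear (fun d e => B (bg d a) e).
  by split=> [y | x] b u v; rewrite ?bg_linl ?BDl ?BZl ?BDr ?BZr.
case: (dg) => sgg _ _; apply: (mulfI (_ : 2 != 0 :> R)); rewrite ?pnatr_eq0 // mulr0 mulr_sumr.
rewrite (eq_big_seq (fun p => B (bg p.1 a) p.2 + B (bg p.2 p.1) a + B (bg p.2 a) p.1)).
  by rewrite !big_split /= -(dual_bases_sum_swap dg bQ) sum_bg_dual_eq0 sum_bg_l_eq0 !addr0.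
by move=> p /sgg[_ p2g]; rewrite Lg_spec.
Qed.

Lemma sum_Lg_S u x :
  \sum_(p <- sg) B (Lg u (S x p.1)) p.2 =
  \sum_(p <- sg) B (S x (bg u p.1)) p.2 - 2^-1 * \sum_(p <- sg) B (J u (S x p.1)) p.2.
Proof.
case: (dg) => sgg _ _.
have Y1 : \sum_(p <- sg) B (bg u (S x p.1)) p.2 = \sum_(p <- sg) B (S x (bg u p.1)) p.2.
  exact: (dual_bases_sum_commute dg (fun w _ => bg_mem u w) (bg_linr u)
                                    (fun w _ => S_mem x w) (S_linr x)).
have Y2 : \sum_(p <- sg) B (bg p.2 u) (S x p.1) = \sum_(p <- sg) B (S x (bg u p.1)) p.2.
  have bQ : is_bilinear (fun d e => B (S x (bg e u)) d).
    by split=> [y | y] a v w; rewrite ?bg_linl ?S_linr ?BDl ?BZl ?BDr ?BZr.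
  transitivity (- \sum_(p <- sg) B (S x (bg p.2 u)) p.1).
    rewrite -sumrN; apply: eq_big_seq => p /sgg[p1g p2g].
    by rewrite S_skew ?bg_mem // opprK.
  rewrite (dual_bases_sum_swap dg bQ) -sumrN; apply: eq_bigr => p _.
  by rewrite bg_anti (linN (S_linr x)) BNl opprK.
have Y3 : \sum_(p <- sg) B (bg p.2 (S x p.1)) u = - \sum_(p <- sg) B (J u (S x p.1)) p.2.
  rewrite -sumrN; apply: eq_big_seq => p /sgg[_ p2g].
  by rewrite J_spec // bg_anti BNl.
apply: (mulfI (_ : 2 != 0 :> R)); rewrite ?pnatr_eq0 // mulr_sumr.
rewrite (eq_big_seq (fun p => B (bg u (S x p.1)) p.2 + B (bg p.2 u) (S x p.1)
                              + B (bg p.2 (S x p.1)) u)); last first.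
  by move=> p /sgg[_ p2g]; rewrite Lg_spec.
by rewrite !big_split /= Y1 Y2 Y3; field.
Qed.

Lemma sum_S_eq0 z : \sum_(p <- sg) B (S z p.1) p.2 = 0.
Proof.
case: (dg) => sgg _ _.
have bQ : is_bilinear (fun d e => B (S z d) e).
  by split=> [y | y] a v w; rewrite ?S_linr ?BDl ?BZl ?BDr ?BZr.
have E : \sum_(p <- sg) B (S z p.1) p.2 = - \sum_(p <- sg) B (S z p.1) p.2.
  rewrite {1}(dual_bases_sum_swap dg bQ) -sumrN.
  by apply: eq_big_seq => p /sgg[p1g p2g]; rewrite S_skew // Bsym.
by move: E; set X := \sum_(p <- _) _; lra.
Qed.

Lemma sum_S_om_sym u v :
  \sum_(p <- sg) B (S (om u p.1) v) p.2 = \sum_(p <- sg) B (S (om v p.1) u) p.2.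
Proof.
case: (dg) => sgg _ _.
have bQ : is_bilinear (fun d e => B (om v e) (om u d)).
  by split=> [y | y] a c w; rewrite ?om_linr ?BDl ?BZl ?BDr ?BZr.
transitivity (\sum_(p <- sg) B (om v p.2) (om u p.1)).
  by apply: eq_big_seq => p /sgg[_ p2g]; rewrite S_spec.
rewrite (dual_bases_sum_swap dg bQ); apply: eq_big_seq => p /sgg[_ p2g].
by rewrite S_spec // Bsym.
Qed.

Lemma sum_om_S_Z sz u v : dual_bases Z sz ->
  \sum_(p <- sz) B (om u (S p.1 v)) p.2 = \sum_(p <- sg) B (S (om v p.1) u) p.2.
Proof.
case: (dg) => sgg sg1 _ [szZ sz1 _].
transitivity (\sum_(p <- sz) \sum_(q <- sg) B (om u q.2) p.2 * B (om v q.1) p.1).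
  apply: eq_big_seq => p /szZ[p1Z p2Z].
  rewrite -S_spec ?S_mem // {1}(sg1 (S p.2 u)) ?S_mem // Bsuml.
  by apply: eq_big_seq => q /sgg[q1g q2g]; rewrite BZl S_spec // (Bsym q.1) S_spec.
rewrite exchange_big /=; apply: eq_big_seq => q /sgg[q1g q2g].
rewrite S_spec // Bsym {2}(sz1 (om u q.2)) ?om_mem // Bsumr.
by apply: eq_bigr => p _; rewrite BZr mulrC.
Qed.

End DualBasesOfg.

Lemma ricci_gZ u x : u \in g -> x \in Z ->
  ricci fullv br B u x = - 4^-1 * trace_on g (fun w => J u (S x w)).
Proof.
move=> ug xZ; have [sg [dg _]] := vbasis_dual_bases nondegenerate_g.
have [sz [dz _]] := vbasis_dual_bases ndZ.
rewrite /ricci (trace_split_gZ dg dz (Kh_linear u x)) (trace_on_dual_bases nondegenerate_g dg).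
- case: (dg) dz => [sgg _ _] [szZ _ _].
  rewrite [X in _ + X]big1_seq ?addr0 => [|p /szZ[p1Z p2Z]]; last by rewrite Kh_gZZ_Z.
  rewrite (eq_big_seq (fun p => 2^-1 * (B (Lg u (S x p.1)) p.2 - B (S x (bg u p.1)) p.2
                                          - B (Lg p.1 (S x u)) p.2))); last first.
    by move=> p /sgg[p1g p2g]; rewrite Kh_ggZ_g.
  by rewrite -mulr_sumr !big_split /= !sumrN sum_Lg_S // sum_Lg_l_eq0 //; field.
- by move=> w _; exact: J_mem.
- by move=> a v w; rewrite S_linr J_linr.
Qed.

Lemma Kh_ggg_g u v w d : u \in g -> v \in g -> w \in g -> d \in g ->
  B (Kh u w v) d = B (Kg u w v) d - 2^-1 * B (S (om u w) v) d
     + 4^-1 * B (S (om w v) u) d - 4^-1 * B (S (om u v) w) d.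
Proof.
move=> ug vg wg dg; rewrite /curv br_split Lh_Dl (Lh_gg (bg_mem _ _) vg).
rewrite (Lh_Zg (om_mem _ _) vg) (Lh_gg wg vg) (Lh_gg ug vg) !Lh_Dr !Lh_Zr.
rewrite (Lh_gg ug (Lg_mem w v)) (Lh_gg wg (Lg_mem u v)).
rewrite (Lh_gZ ug (om_mem w v)) (Lh_gZ wg (om_mem u v)).
by rewrite !(BDl, BBl, BNl, BZl, B0l) !(orth_Zg (om_mem _ _) dg); field.
Qed.

Lemma Kh_gZg_Z u v z d : u \in g -> v \in g -> z \in Z -> d \in Z ->
  B (Kh u z v) d = 4^-1 * B (om u (S z v)) d.
Proof.
move=> ug vg zZ dZ; rewrite /curv (br_centralr u zZ) Lh_0l (Lh_Zg zZ vg) Lh_Nr Lh_Zr.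
rewrite (Lh_gg ug (S_mem z v)) (Lh_gg ug vg) Lh_Dr Lh_Zr (Lh_Zg zZ (Lg_mem u v)).
rewrite (Lh_ZZ zZ (om_mem u v)).
by rewrite !(BDl, BBl, BNl, BZl, B0l) !(orth_gZ (Lg_mem _ _) dZ) !(orth_gZ (S_mem _ _) dZ); field.
Qed.

Lemma ricci_gg u v : u \in g -> v \in g ->
  ricci fullv br B u v = ricci g bg B u v
     - 2^-1 * trace_on g (fun w => omega_star br B g Z u (om v w)).
Proof.
move=> ug vg; have [sg [dg _]] := vbasis_dual_bases nondegenerate_g.
have [sz [dz _]] := vbasis_dual_bases ndZ.
have -> : trace_on g (fun w => omega_star br B g Z u (om v w)) =
          \sum_(p <- sg) B (S (om v p.1) u) p.2.
  apply: (trace_on_dual_bases nondegenerate_g dg) => [w _ | a w1 w2]; first exact: S_mem.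
  by rewrite om_linr; exact: S_linl.
rewrite /ricci (trace_split_gZ dg dz (Kh_linear u v)).
rewrite (trace_on_dual_bases nondegenerate_g dg (fun w _ => curv_mem nondegenerate_g bg_linl u w v)
           (curv_linear nondegenerate_g bg_linl bg_linr u v)).
case: (dg) (dz) => [sgg _ _] [szZ _ _].
rewrite (eq_big_seq (fun p => B (Kg u p.1 v) p.2 - 2^-1 * B (S (om u p.1) v) p.2
           + 4^-1 * B (S (om p.1 v) u) p.2 - 4^-1 * B (S (om u v) p.1) p.2)); last first.
  by move=> p /sgg[p1g p2g]; rewrite Kh_ggg_g.
rewrite [X in _ + X](eq_big_seq (fun p => 4^-1 * B (om u (S p.1 v)) p.2)); last first.
  by move=> p /szZ[p1Z p2Z]; rewrite Kh_gZg_Z.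
have om_swap : \sum_(p <- sg) B (S (om p.1 v) u) p.2 = - \sum_(p <- sg) B (S (om v p.1) u) p.2.
  by rewrite -sumrN; apply: eq_bigr => p _; rewrite om_anti (linN (S_linl u)) BNl.
rewrite !big_split /= !sumrN -!mulr_sumr om_swap (sum_S_om_sym dg u v) (sum_om_S_Z dg _ _ dz).
by rewrite sum_S_eq0 //; field.
Qed.

End Decomposition.
End BilinearForm.

Unset Implicit Arguments.
Theorem proposition3p2 (R : realType) (V : vectType R)
  (br : V -> V -> V) (B : V -> V -> R) (Z g : {vspace V}) :
  is_lie_bracket br ->
  nilpotent br ->
  is_sym_bilinear B ->
  lorentzian B ->
  (* Z is the center of h *)
  (forall z, z \in Z <-> forall x, br z x = 0) ->
  (* the center is nondegenerate, with positive definite restricted form *)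
  (forall z, z \in Z -> z != 0 -> 0 < B z z) ->
  (* g = Z(h)^perp *)
  (forall u, u \in g <-> forall z, z \in Z -> B u z = 0) ->
  [/\ (forall u v, u \in g -> v \in g ->
         ricci fullv br B u v =
         ricci g (brg br g Z) B u v
         - 2^-1 * trace_on g (fun w => omega_star br B g Z u (omega br g Z v w))),
      (forall x y, x \in Z -> y \in Z ->
         ricci fullv br B x y =
         - 4^-1 * trace_on g (fun w => S_op br B g Z x (S_op br B g Z y w))) &
      (forall u x, u \in g -> x \in Z ->
         ricci fullv br B u x =
         - 4^-1 * trace_on g (fun w => J_op br B g Z u (S_op br B g Z x w)))].
Proof.
move=> Hbr Hnil HB Hlor HZ Hpos Hg.
have ndV := lorentzian_nondegenerate HB Hlor.
have ndZ := posdef_nondegenerate Hpos.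
have Zcentral z x : z \in Z -> br z x = 0 by move/HZ.
split=> [u v ug vg | x y xZ yZ | u x ug xZ].
- exact: ricci_gg.
- exact: ricci_ZZ.
- exact: ricci_gZ.
Qed.
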